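(* Let $F$, $H$, $X$, $\Omega$, $Q$ and the sequences generated by the IneIREG method be as described in the context, and suppose $H$ is $\mu$-strongly monotone for some $\mu>0$. Suppose $\eta_k\equiv\eta>0$; $\lambda_k\in[\underline\lambda,\overline\lambda]$ for all $k\ge0$ with $0<\underline\lambda\le\overline\lambda<1/L$, $L:=L_F+\eta L_H$; and $\alpha_0\in[0,1]$ and $\alpha_{k+1}\le(1-\beta_k)\alpha_k$ for all $k\ge0$, where $\beta_k:=\big(\frac{1}{1-\lambda_k^2L^2}+\frac{1}{2\lambda_k\eta\mu}\big)^{-1}$. Define $p_k:=\big(\prod_{i=0}^k(1-\beta_i)\big)^{-1}$ for $k\ge0$, and for $k\ge1$ $\Lambda_k:=\sum_{j=0}^{k-1}\lambda_j\eta p_j$ and $\overline y_k:=\Lambda_k^{-1}\sum_{j=0}^{k-1}\lambda_j\eta p_jy_j$. Let $\varepsilon>0$ and $k\ge1$. If $$k\ge\Big\lceil\Big(\frac{1}{1-\overline\lambda^2L^2}+\frac{1}{2\underline\lambda\eta\mu}\Big)\log\Big(\frac{(k+1)D_X^2}{\underline\lambda\eta\varepsilon}\Big)\Big\rceil,$$ then $-B_H\,\mathrm{dist}(\overline y_k,Q)\le\mathrm{Gap}(\overline y_k,H,Q)\le\varepsilon$.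
   Context: Work in $\mathbb{R}^n$ with Euclidean inner product $\langle\cdot,\cdot\rangle$ and norm $\|\cdot\|$; $\log$ is the natural logarithm. The maps $F\colon \mathrm{Dom}\,F\to\mathbb{R}^n$ and $H\colon\mathrm{Dom}\,H\to\mathbb{R}^n$ are monotone and Lipschitz continuous with constants $L_F>0$ and $L_H>0$; $H$ is $\mu$-strongly monotone means $\langle H(x)-H(y),x-y\rangle\ge\mu\|x-y\|^2$ for all $x,y\in\mathrm{Dom}\,H$. $X$ is a nonempty compact convex set and $\Omega$ a nonempty closed convex set with $X\subset\Omega\subset\mathrm{Dom}\,F\cap\mathrm{Dom}\,H$; $P_X,P_\Omega$ denote orthogonal projections. $Q:=\{x\in X:\langle F(x),y-x\rangle\ge0\ \forall y\in X\}$ is assumed nonempty. $D_X:=\sup_{x,y\in X}\|x-y\|$, $B_H:=\sup_{x\in Q}\|H(x)\|$, $\mathrm{dist}(y,Q)$ is the Euclidean distance to $Q$. $\mathrm{Gap}(z,H,Q):=\sup_{x\in Q}\langle H(x),z-x\rangle$. IneIREG method: start with $x_0=x_{-1}\in X$; for $k=0,1,\dots$, with parameters $\alpha_k\ge0$, $\lambda_k>0$, $\eta_k>0$, set $w_k=x_k+\alpha_k(x_k-x_{k-1})$, $w'_k=P_\Omega(w_k)$, $y_k=P_X\big(w_k-\lambda_k(F(w'_k)+\eta_kH(w'_k))\big)$, $x_{k+1}=P_X\big(w_k-\lambda_k(F(y_k)+\eta_kH(y_k))\big)$. *)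

From mathcomp Require Import all_boot all_order all_algebra.
From mathcomp Require Import all_classical all_reals all_analysis.
Import numFieldNormedType.Exports.
Set Implicit Arguments. Unset Strict Implicit. Unset Printing Implicit Defensive.
Import Order.TTheory GRing.Theory Num.Theory.
Local Open Scope classical_set_scope.
Local Open Scope ring_scope.

Section Defs.
Variables (R : realType) (n : nat).
Notation vec := 'rV[R]_n.

Definition dotp (u v : vec) : R := \sum_(i < n) u 0 i * v 0 i.
Definition enorm (u : vec) : R := Num.sqrt (dotp u u).

Definition convex_setRn (A : set vec) : Prop :=
  forall x y (t : R), A x -> A y -> 0 <= t -> t <= 1 -> A (t *: x + (1 - t) *: y).

Definition is_proj (A : set vec) (x p : vec) : Prop :=
  A p /\ forall y, A y -> enorm (x - p) <= enorm (x - y).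

Definition monotoneRn (D : set vec) (F : vec -> vec) : Prop :=
  forall x y, D x -> D y -> 0 <= dotp (F x - F y) (x - y).
Definition strongly_monotoneRn (D : set vec) (F : vec -> vec) (mu : R) : Prop :=
  forall x y, D x -> D y -> mu * enorm (x - y) ^+ 2 <= dotp (F x - F y) (x - y).
Definition lipschitzRn (D : set vec) (F : vec -> vec) (L : R) : Prop :=
  forall x y, D x -> D y -> enorm (F x - F y) <= L * enorm (x - y).

Definition VIsol (F : vec -> vec) (X : set vec) : set vec :=
  [set x | X x /\ forall y, X y -> 0 <= dotp (F x) (y - x)].

Definition diamRn (X : set vec) : R :=
  sup [set r | exists x y, X x /\ X y /\ r = enorm (x - y)].
Definition supnorm (H : vec -> vec) (Q : set vec) : R :=
  sup [set r | exists x, Q x /\ r = enorm (H x)].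
Definition distRn (y : vec) (Q : set vec) : R :=
  inf [set r | exists x, Q x /\ r = enorm (y - x)].
Definition Gap (z : vec) (H : vec -> vec) (Q : set vec) : R :=
  sup [set r | exists x, Q x /\ r = dotp (H x) (z - x)].

(* x k = x_k for k >= 0; x_{-1} := x_0 *)
Definition xprev (x : nat -> vec) (k : nat) : vec :=
  if k is k'.+1 then x k' else x 0%N.

Definition IneIREG (F H : vec -> vec) (X Omega : set vec)
  (alpha lam eta : nat -> R) (x w w' y : nat -> vec) : Prop :=
  X (x 0%N) /\
  forall k : nat,
    w k = x k + alpha k *: (x k - xprev x k) /\
    is_proj Omega (w k) (w' k) /\
    is_proj X (w k - lam k *: (F (w' k) + eta k *: H (w' k))) (y k) /\
    is_proj X (w k - lam k *: (F (y k) + eta k *: H (y k))) (x k.+1).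

End Defs.

(* Write G := F + eta H; it is L-Lipschitz and (eta mu)-strongly monotone on Omega.
   For a solution x* of VI(F, X), the projection inequalities, Young's inequality and
   the harmonic-mean bound beta |a + b|^2 <= c1 |a|^2 + c2 |b|^2 show that one
   extragradient step contracts |x_k - x*|^2 by the factor 1 - beta_k, up to the
   term 2 lam_k eta <H x*, y_k - x*>.  After multiplication by p_k the inertial terms
   telescope, because alpha_k p_k is nonincreasing and at most 1.  This gives
   sum_(j<k) lam_j eta p_j <H x*, y_j - x*> <= (k + 1/2) D_X^2, and by linearity the
   left-hand side is Lam_k <H x*, ybar_k - x*>.  Since beta_j >= 1/T, we have
   p_k >= exp(k / T), so the bound on k forces Lam_k >= (k + 1) D_X^2 / eps.  The lower
   bound on the gap is Cauchy-Schwarz against points of the solution set. *)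

From mathcomp Require Import all_boot all_order all_algebra.
From mathcomp Require Import all_classical all_reals all_analysis.
From mathcomp Require Import ring lra.
Import numFieldNormedType.Exports.
Import Order.TTheory GRing.Theory Num.Theory.
Local Open Scope classical_set_scope.
Local Open Scope ring_scope.
Set Implicit Arguments.
Unset Strict Implicit.
Unset Printing Implicit Defensive.

Ltac dotp_ring := apply/eqP; rewrite -subr_eq0; apply/eqP;
  rewrite /dotp; repeat (rewrite mulr_sumr || rewrite -sumrN || rewrite -big_split);
  apply: big1 => i _ /=; rewrite ?mxE /=; ring.

Section Euclidean.
Context {R : realType} {n : nat}.
Notation vec := 'rV[R]_n.
Implicit Types u v : vec.

Lemma dotp_ge0 u : 0 <= dotp u u.
Proof. by apply: sumr_ge0 => i _; rewrite -expr2 sqr_ge0. Qed.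

Lemma enorm_ge0 u : 0 <= enorm u.
Proof. exact: sqrtr_ge0. Qed.

Lemma enorm_sqr u : enorm u ^+ 2 = dotp u u.
Proof. by rewrite /enorm sqr_sqrtr // dotp_ge0. Qed.

Lemma ler_enorm u v : (enorm u <= enorm v) = (dotp u u <= dotp v v).
Proof. exact/ler_sqrt/dotp_ge0. Qed.

Lemma enorm_le u (m : R) : 0 <= m -> dotp u u <= m ^+ 2 -> enorm u <= m.
Proof. by move=> m0 h; rewrite -(ger0_norm m0) -sqrtr_sqr ler_sqrt // sqr_ge0. Qed.

Lemma dotpZr u v (a : R) : dotp u (a *: v) = a * dotp u v.
Proof. dotp_ring. Qed.

Lemma dotp_sumr u (m : nat) (b : nat -> R) (v : nat -> vec) :
  dotp u (\sum_(j < m) b j *: v j) = \sum_(j < m) b j * dotp u (v j).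
Proof.
elim: m => [|m IH]; first by rewrite !big_ord0; apply: big1 => i _; rewrite mxE mulr0.
by rewrite !big_ord_recr /= -IH; dotp_ring.
Qed.

Lemma mul2_dotp_le u v : 2 * dotp u v <= dotp u u + dotp v v.
Proof.
have := dotp_ge0 (u - v).
have -> : dotp (u - v) (u - v) = dotp u u + dotp v v - 2 * dotp u v by dotp_ring.
lra.
Qed.

Lemma dotp_sqr_le u v : dotp u v ^+ 2 <= dotp u u * dotp v v.
Proof.
set a := dotp u u; set b := dotp u v; set c := dotp v v.
have quad s t : 0 <= s ^+ 2 * a - 2 * s * t * b + t ^+ 2 * c.
  have -> : s ^+ 2 * a - 2 * s * t * b + t ^+ 2 * c = dotp (s *: u - t *: v) (s *: u - t *: v).
    by rewrite /a /b /c; dotp_ring.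
  exact: dotp_ge0.
have a0 : 0 <= a := dotp_ge0 u.
have [c0|c_neq0] := eqVneq c 0; last first.
  have c_gt0 : 0 < c by rewrite lt0r c_neq0 dotp_ge0.
  by have := quad c b; nra.
have [a0'|a_neq0] := eqVneq a 0; first by have := quad b 1; rewrite a0' c0; nra.
have a_gt0 : 0 < a by rewrite lt0r a_neq0.
by have := quad b a; rewrite c0; nra.
Qed.

Lemma normr_dotp_le u v : `|dotp u v| <= enorm u * enorm v.
Proof.
rewrite -(ger0_norm (mulr_ge0 (enorm_ge0 u) (enorm_ge0 v))).
rewrite -ler_sqr ?normr_ge0 // !real_normK ?num_real // exprMn !enorm_sqr.
exact: dotp_sqr_le.
Qed.

Lemma dotp_le u v : dotp u v <= enorm u * enorm v.
Proof. by have := normr_dotp_le u v; rewrite ler_norml => /andP[]. Qed.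

Lemma enormD_le u v : enorm (u + v) <= enorm u + enorm v.
Proof.
have := dotp_le u v; have := enorm_ge0 u; have := enorm_ge0 v => u0 v0 uv.
apply: enorm_le; first lra.
have -> : dotp (u + v) (u + v) = dotp u u + 2 * dotp u v + dotp v v by dotp_ring.
rewrite -!enorm_sqr; nra.
Qed.

Lemma enormZ (a : R) u : 0 <= a -> enorm (a *: u) = a * enorm u.
Proof.
move=> a0; rewrite /enorm (_ : dotp _ _ = a ^+ 2 * dotp u u); last by dotp_ring.
by rewrite sqrtrM ?sqr_ge0 // sqrtr_sqr ger0_norm.
Qed.

Lemma dotp_extrapolate u v (a : R) :
  dotp (u + a *: (u - v)) (u + a *: (u - v)) =
  dotp u u + a * (dotp u u - dotp v v) + (a + a ^+ 2) * dotp (u - v) (u - v).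
Proof. dotp_ring. Qed.

Lemma harmonic_dotpD_le (c1 c2 : R) u v : 0 < c1 -> 0 < c2 ->
  (c1^-1 + c2^-1)^-1 * dotp (u + v) (u + v) <= c1 * dotp u u + c2 * dotp v v.
Proof.
move=> c1_gt0 c2_gt0; have c12_gt0 : 0 < c1 + c2 by rewrite addr_gt0.
have -> : (c1^-1 + c2^-1)^-1 = c1 * c2 / (c1 + c2).
  by field; rewrite ?gt_eqF.
rewrite mulrAC ler_pdivrMr // -subr_ge0.
have -> : (c1 * dotp u u + c2 * dotp v v) * (c1 + c2) - c1 * c2 * dotp (u + v) (u + v)
          = dotp (c1 *: u - c2 *: v) (c1 *: u - c2 *: v).
  by rewrite mulrDl !(mulrAC _ _ (c1 + c2)); dotp_ring.
exact: dotp_ge0.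
Qed.

End Euclidean.

Section WeightedMean.
Context {R : realType} {n : nat}.
Notation vec := 'rV[R]_n.

Definition weighted_mean (b : nat -> R) (v : nat -> vec) (m : nat) : vec :=
  (\sum_(j < m) b j)^-1 *: \sum_(j < m) b j *: v j.

Lemma dotp_weighted_mean (u x : vec) (m : nat) (b : nat -> R) (v : nat -> vec) :
  \sum_(j < m) b j != 0 ->
  dotp u (weighted_mean b v m - x) = (\sum_(j < m) b j)^-1 * \sum_(j < m) b j * dotp u (v j - x).
Proof.
move=> sum_neq0.
have -> : weighted_mean b v m - x = (\sum_(j < m) b j)^-1 *: \sum_(j < m) b j *: (v j - x).
  rewrite /weighted_mean -[x in LHS](scale1r x) -(mulVf sum_neq0) -scalerA -scalerBr.
  by congr (_ *: _); rewrite scaler_suml -sumrB; apply: eq_bigr => j _; rewrite scalerBr.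
by rewrite dotpZr (dotp_sumr u m b (fun j => v j - x)).
Qed.

End WeightedMean.

Section Projection.
Context {R : realType} {n : nat}.
Notation vec := 'rV[R]_n.
Variables (A : set vec) (z p : vec).
Hypotheses (convA : convex_setRn A) (proj_p : is_proj A z p).

Lemma is_proj_variational q : A q -> dotp (z - p) (q - p) <= 0.
Proof.
move=> Aq; have [Ap p_min] := proj_p.
set c := dotp (z - p) (q - p); set d := dotp (q - p) (q - p).
have d0 : 0 <= d := dotp_ge0 _.
have segment t : 0 <= t -> t <= 1 -> 2 * t * c <= t ^+ 2 * d.
  move=> t0 t1; have := p_min _ (convA Aq Ap t0 t1); rewrite ler_enorm.
  have -> : dotp (z - (t *: q + (1 - t) *: p)) (z - (t *: q + (1 - t) *: p))
            = dotp (z - p) (z - p) - 2 * t * c + t ^+ 2 * d by rewrite /c /d; dotp_ring.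
  lra.
rewrite leNgt; apply/negP => c_gt0.
have cd_gt0 : 0 < c + d by lra.
set t := c / (c + d).
have t_gt0 : 0 < t by rewrite divr_gt0.
have t_le1 : t <= 1 by rewrite ler_pdivrMr // mul1r; lra.
have tcd : t * (c + d) = c by rewrite mulfVK // gt_eqF.
have := segment _ (ltW t_gt0) t_le1.
have -> : 2 * t * c = t * (2 * c) by ring.
have -> : t ^+ 2 * d = t * (t * d) by ring.
rewrite ler_pM2l //; nra.
Qed.

Lemma is_proj_nonexpansive q : A q -> dotp (p - q) (p - q) <= dotp (z - q) (z - q).
Proof.
move=> Aq; have := is_proj_variational Aq; have := dotp_ge0 (z - p).
have -> : dotp (z - q) (z - q) =
  dotp (z - p) (z - p) + dotp (p - q) (p - q) - 2 * dotp (z - p) (q - p) by dotp_ring.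
lra.
Qed.

End Projection.

Section Operators.
Context {R : realType} {n : nat}.
Notation vec := 'rV[R]_n.
Variables (D : set vec) (F H : vec -> vec) (eta : R).
Hypothesis eta_ge0 : 0 <= eta.

Lemma lipschitzRn_addZ (LF LH : R) : lipschitzRn D F LF -> lipschitzRn D H LH ->
  lipschitzRn D (fun u => F u + eta *: H u) (LF + eta * LH).
Proof.
move=> lipF lipH u v Du Dv.
have -> : F u + eta *: H u - (F v + eta *: H v) = (F u - F v) + eta *: (H u - H v).
  by apply/matrixP => i j; rewrite !mxE; ring.
apply: le_trans (enormD_le _ _) _; rewrite enormZ // mulrDl -mulrA.
by rewrite lerD ?ler_wpM2l ?lipF ?lipH.
Qed.

Lemma strongly_monotoneRn_addZ (mu : R) : monotoneRn D F -> strongly_monotoneRn D H mu ->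
  strongly_monotoneRn D (fun u => F u + eta *: H u) (eta * mu).
Proof.
move=> monF smH u v Du Dv; have := monF _ _ Du Dv.
have := ler_wpM2l eta_ge0 (smH _ _ Du Dv).
have -> : dotp (F u + eta *: H u - (F v + eta *: H v)) (u - v)
          = dotp (F u - F v) (u - v) + eta * dotp (H u - H v) (u - v) by dotp_ring.
rewrite mulrA; lra.
Qed.

End Operators.

Section Extragradient.
Context {R : realType} {n : nat}.
Notation vec := 'rV[R]_n.
Variables (X Omega : set vec) (G : vec -> vec) (L lam : R) (w w' y x' : vec).
Hypotheses (convX : convex_setRn X) (convO : convex_setRn Omega) (XO : X `<=` Omega).
Hypotheses (lipG : lipschitzRn Omega G L) (L_ge0 : 0 <= L).
Hypotheses (proj_w' : is_proj Omega w w') (proj_y : is_proj X (w - lam *: G w') y)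
  (proj_x' : is_proj X (w - lam *: G y) x').

Lemma extragradient_descent x : X x ->
  dotp (x' - x) (x' - x) <= dotp (w - x) (w - x)
    - (1 - lam ^+ 2 * L ^+ 2) * dotp (w - y) (w - y) - 2 * lam * dotp (G y) (y - x).
Proof.
move=> Xx; have Xy : X y by case: proj_y.
have Xx' : X x' by case: proj_x'.
set gw := G w'; set gy := G y.
have vi_y := is_proj_variational convX proj_y Xx'.
have vi_x' := is_proj_variational convX proj_x' Xx.
have young : 2 * lam * dotp (gw - gy) (x' - y)
              <= lam ^+ 2 * dotp (gw - gy) (gw - gy) + dotp (x' - y) (x' - y).
  have := mul2_dotp_le (lam *: (gw - gy)) (x' - y).
  have -> : dotp (lam *: (gw - gy)) (x' - y) = lam * dotp (gw - gy) (x' - y) by dotp_ring.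
  have -> : dotp (lam *: (gw - gy)) (lam *: (gw - gy)) = lam ^+ 2 * dotp (gw - gy) (gw - gy).
    by dotp_ring.
  lra.
have lip : dotp (gw - gy) (gw - gy) <= L ^+ 2 * dotp (w - y) (w - y).
  have Ow' : Omega w' by case: proj_w'.
  have w'y : enorm (w' - y) <= enorm (w - y).
    by rewrite ler_enorm; exact: (is_proj_nonexpansive convO proj_w' (XO Xy)).
  have gwy : enorm (gw - gy) <= L * enorm (w - y).
    exact: le_trans (lipG Ow' (XO Xy)) (ler_wpM2l L_ge0 w'y).
  rewrite -!enorm_sqr -exprMn lerXn2r ?nnegrE ?mulr_ge0 ?enorm_ge0 //.
have -> : dotp (x' - x) (x' - x) = dotp (w - x) (w - x) - dotp (w - y) (w - y)
    - dotp (x' - y) (x' - y) + 2 * lam * dotp (gw - gy) (x' - y) - 2 * lam * dotp gy (y - x)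
    + 2 * dotp (w - lam *: gw - y) (x' - y) + 2 * dotp (w - lam *: gy - x') (x - x').
  by dotp_ring.
have := ler_wpM2l (sqr_ge0 lam) lip; rewrite mulrBl mul1r mulrA -exprMn; lra.
Qed.

Lemma extragradient_contraction x (c e : R) : X x -> 0 < lam -> lam * L < 1 -> 0 < c ->
  c * dotp (y - x) (y - x) + e <= dotp (G y) (y - x) ->
  dotp (x' - x) (x' - x) <=
    (1 - ((1 - lam ^+ 2 * L ^+ 2)^-1 + (2 * lam * c)^-1)^-1) * dotp (w - x) (w - x) - 2 * lam * e.
Proof.
move=> Xx lam_gt0 lamL_lt1 c_gt0 strong.
have c1_gt0 : 0 < 1 - lam ^+ 2 * L ^+ 2.
  by rewrite -exprMn subr_gt0 expr_lt1 // mulr_ge0 // ltW.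
have c2_gt0 : 0 < 2 * lam * c by rewrite !mulr_gt0.
have := harmonic_dotpD_le (w - y) (y - x) c1_gt0 c2_gt0.
rewrite addrA subrK.
have := extragradient_descent Xx.
have two_lam_ge0 : 0 <= 2 * lam by rewrite mulr_ge0 // ltW.
have := ler_wpM2l two_lam_ge0 strong.
rewrite mulrDr !mulrA mulrBl mul1r; lra.
Qed.

End Extragradient.

Section InverseProduct.
Context {R : realType}.
Variable beta : nat -> R.
Hypothesis beta01 : forall j, 0 < beta j < 1.

(* [invprod beta k.+1] is the weight p_k of the paper. *)
Definition invprod (m : nat) : R := (\prod_(i < m) (1 - beta i))^-1.

Lemma prod_compl_gt0 m : 0 < \prod_(i < m) (1 - beta i).
Proof. by apply: prodr_gt0 => i _; have := beta01 i; lra. Qed.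

Lemma prod_compl_le1 m : \prod_(i < m) (1 - beta i) <= 1.
Proof.
elim: m => [|m IH]; first by rewrite big_ord0.
by rewrite big_ord_recr /=; have := beta01 m; have := prod_compl_gt0 m; nra.
Qed.

Lemma invprod_ge1 m : 1 <= invprod m.
Proof. by rewrite invf_ge1 ?prod_compl_gt0 ?prod_compl_le1. Qed.

Lemma invprod_gt0 m : 0 < invprod m.
Proof. exact: lt_le_trans ltr01 (invprod_ge1 m). Qed.

Lemma invprod0 : invprod 0 = 1.
Proof. by rewrite /invprod big_ord0 invr1. Qed.

Lemma invprodS m : invprod m.+1 * (1 - beta m) = invprod m.
Proof.
have beta_lt1 : 1 - beta m != 0 by rewrite subr_eq0 gt_eqF //; case/andP: (beta01 m).
by rewrite /invprod big_ord_recr /= invfM mulfVK.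
Qed.

Lemma invprod_ge_expR (b : R) m : (forall j, b <= beta j) -> expR (m%:R * b) <= invprod m.
Proof.
move=> b_le; elim: m => [|m IH]; first by rewrite mul0r expR0 invprod0.
rewrite -natr1 mulrDl mul1r expRD.
have decay : expR b * (1 - beta m) <= 1.
  have : 1 - beta m <= expR (- b) by apply: le_trans (expR_ge1Dx _); have := b_le m; lra.
  rewrite expRN -(mulfV (lt0r_neq0 (expR_gt0 b))); exact/ler_wpM2l/ltW/expR_gt0.
have := invprodS m; have := invprod_gt0 m.+1; have := expR_gt0 b.
have := expR_gt0 (m%:R * b); nra.
Qed.

Variable alpha : nat -> R.
Hypotheses (alpha_ge0 : forall j, 0 <= alpha j) (alpha0_le1 : alpha 0%N <= 1).
Hypothesis alphaS : forall j, alpha j.+1 <= (1 - beta j) * alpha j.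

Lemma invprod_alpha_decr m : invprod m.+1 * alpha m.+1 <= invprod m * alpha m.
Proof. by rewrite -(invprodS m) -mulrA ler_wpM2l ?alphaS // ltW ?invprod_gt0. Qed.

Lemma invprod_alpha_le1 m : invprod m * alpha m <= 1.
Proof.
elim: m => [|m IH]; first by rewrite invprod0 mul1r.
exact: le_trans (invprod_alpha_decr m) IH.
Qed.

Lemma alpha_le1 m : alpha m <= 1.
Proof. by have := invprod_alpha_le1 m; have := invprod_ge1 m; have := alpha_ge0 m; nra. Qed.

Lemma inertial_weighted_sum_le (c h u d : nat -> R) (D2 : R) :
  (forall j, 0 <= u j <= D2) -> (forall j, 0 <= d j <= D2) ->
  (forall j, u j.+1 <= (1 - beta j) * (u j + alpha j * (u j - u j.-1)
                        + (alpha j + alpha j ^+ 2) * d j) - 2 * c j * h j) ->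
  forall m, 2 * \sum_(j < m) c j * invprod j.+1 * h j <= (2 * m%:R + 1) * D2.
Proof.
move=> u_bd d_bd step.
pose s j := invprod j * alpha j.
(* A Lyapunov function: it grows by at most 2 D2 per step, since the inertial terms
   telescope against the nonincreasing sequence s. *)
pose V m := 2 * \sum_(j < m) c j * invprod j.+1 * h j
            + invprod m * u m + s m * (D2 - u m.-1).
have s_ge0 j : 0 <= s j by rewrite mulr_ge0 // ltW ?invprod_gt0.
have V_step m : V m.+1 <= V m + 2 * D2.
  have [_ umD] := andP (u_bd m); have [dm0 dmD] := andP (d_bd m).
  have := ler_wpM2l (ltW (invprod_gt0 m.+1)) (step m).
  rewrite mulrBr mulrA invprodS.
  have decr : 0 <= (s m - s m.+1) * (D2 - u m).
    by rewrite mulr_ge0 // subr_ge0 ?invprod_alpha_decr.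
  have s_le1 : s m <= 1 := invprod_alpha_le1 m.
  have a_le1 := alpha_le1 m; have a_ge0 := alpha_ge0 m; have sm0 := s_ge0 m.
  have inertia : s m * (1 + alpha m) * d m <= 2 * D2.
    have : s m * (1 + alpha m) <= 2 by nra.
    have : 0 <= s m * (1 + alpha m) by nra.
    nra.
  move: decr inertia; rewrite /V /s big_ord_recr /=; lra.
have V_le m : V m <= (2 * m%:R + 1) * D2.
  elim: m => [|m IH].
    rewrite /V big_ord0 invprod0 /s invprod0 mulr0 add0r !mul1r /=.
    have [_ u0_le] := andP (u_bd 0%N).
    have : 0 <= (1 - alpha 0%N) * (D2 - u 0%N) by rewrite mulr_ge0 ?subr_ge0.
    lra.
  by rewrite -natr1; apply: le_trans (V_step m) _; lra.
move=> m; apply: le_trans (V_le m); rewrite /V -addrA lerDl.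
have [um0 _] := andP (u_bd m); have [_ um'D] := andP (u_bd m.-1).
by rewrite addr_ge0 ?mulr_ge0 ?subr_ge0 ?s_ge0 // ltW ?invprod_gt0.
Qed.

End InverseProduct.

Section Boundedness.
Context {R : realType} {n : nat}.
Notation vec := 'rV[R]_n.

Lemma dotp_le_mx_norm (u : vec) : dotp u u <= n%:R * `|u| ^+ 2.
Proof.
apply: (@le_trans _ _ (\sum_(i < n) `|u| ^+ 2)); last first.
  by rewrite sumr_const card_ord mulr_natl.
apply: ler_sum => i _; rewrite -expr2 -real_normK ?num_real // lerXn2r ?nnegrE //.
have -> : `|u| = mx_norm u by [].
by rewrite mx_normrE; apply: le_trans (le_bigmax _ _ (0, i)).
Qed.

Lemma compact_enorm_bounded (X : set vec) : compact X ->
  exists M, forall u v, X u -> X v -> enorm (u - v) <= M.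
Proof.
move=> /compact_bounded [M0 [_ X_bd]].
have X_le u : X u -> `|u| <= `|M0| + 1.
  by apply: X_bd; rewrite (le_lt_trans (ler_norm _)) ?ltrDl.
exists (1 + n%:R * (2 * (`|M0| + 1)) ^+ 2) => u v Xu Xv.
have sqrt_le : enorm (u - v) <= 1 + dotp (u - v) (u - v).
  by apply: enorm_le; have := dotp_ge0 (u - v); nra.
apply: le_trans sqrt_le _; rewrite lerD2l; apply: le_trans (dotp_le_mx_norm _) _.
rewrite ler_wpM2l // lerXn2r ?nnegrE //.
by apply: le_trans (ler_normB u v) _; rewrite mulr2n mulrDl mul1r lerD ?X_le.
Qed.

Lemma diamRn_ge (X : set vec) u v : compact X -> X u -> X v ->
  enorm (u - v) <= diamRn X.
Proof.
move=> /compact_enorm_bounded [M X_le] Xu Xv.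
apply: sup_upper_bound; last by exists u, v.
split; first by exists (enorm (u - v)), u, v.
by exists M => r [a [b [Xa [Xb ->]]]]; exact: X_le.
Qed.

Lemma dotp_le_diamRn (X : set vec) u v : compact X -> X u -> X v ->
  dotp (u - v) (u - v) <= diamRn X ^+ 2.
Proof.
move=> cX Xu Xv; rewrite -enorm_sqr lerXn2r ?nnegrE ?enorm_ge0 ?diamRn_ge //.
exact: le_trans (enorm_ge0 _) (diamRn_ge cX Xu Xu).
Qed.

Lemma lipschitzRn_enorm_le (Q : set vec) (H : vec -> vec) (L M : R) x0 x :
  0 <= L -> lipschitzRn Q H L -> (forall u v, Q u -> Q v -> enorm (u - v) <= M) ->
  Q x0 -> Q x -> enorm (H x) <= enorm (H x0) + L * M.
Proof.
move=> L_ge0 lipH Q_bd Qx0 Qx; rewrite -[H x](subrK (H x0)) addrC.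
apply: le_trans (enormD_le _ _) _; rewrite lerD2l.
exact: le_trans (lipH _ _ Qx Qx0) (ler_wpM2l L_ge0 (Q_bd _ _ Qx Qx0)).
Qed.

End Boundedness.

Section GapFunction.
Context {R : realType} {n : nat}.
Notation vec := 'rV[R]_n.
Variables (Q : set vec) (H : vec -> vec).

Lemma Gap_le (z : vec) (e : R) : Q !=set0 ->
  (forall x, Q x -> dotp (H x) (z - x) <= e) -> Gap z H Q <= e.
Proof.
move=> [x0 Qx0] le_e; apply: ge_sup; first by exists (dotp (H x0) (z - x0)), x0.
by move=> r [x [Qx ->]]; exact: le_e.
Qed.

Variables (M B : R) (x0 : vec).
Hypotheses (Qx0 : Q x0) (Q_bd : forall u v, Q u -> Q v -> enorm (u - v) <= M).
Hypothesis H_bd : forall x, Q x -> enorm (H x) <= B.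

Lemma supnorm_ge x : Q x -> enorm (H x) <= supnorm H Q.
Proof.
move=> Qx; apply: sup_upper_bound; last by exists x.
split; first by exists (enorm (H x0)), x0.
by exists B => r [u [Qu ->]]; exact: H_bd.
Qed.

Lemma Gap_ge (z x : vec) : Q x -> dotp (H x) (z - x) <= Gap z H Q.
Proof.
move=> Qx; apply: sup_upper_bound; last by exists x.
split; first by exists (dotp (H x0) (z - x0)), x0.
exists (B * (enorm (z - x0) + M)) => r [u [Qu ->]].
apply: le_trans (dotp_le _ _) _; apply: ler_pM; rewrite ?enorm_ge0 ?H_bd //.
have -> : z - u = (z - x0) + (x0 - u) by rewrite addrA subrK.
by apply: le_trans (enormD_le _ _) _; rewrite lerD2l Q_bd.
Qed.

Lemma Gap_ge_supnorm_dist (z : vec) : - supnorm H Q * distRn z Q <= Gap z H Q.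
Proof.
set S := supnorm H Q.
have Gap_ge_dist x : Q x -> - (S * enorm (z - x)) <= Gap z H Q.
  move=> Qx; apply: le_trans (Gap_ge z Qx).
  have := normr_dotp_le (H x) (z - x); rewrite ler_norml => /andP[dotp_ge _].
  by apply: le_trans dotp_ge; rewrite lerN2 ler_wpM2r ?enorm_ge0 ?supnorm_ge.
have [S0|S_neq0] := eqVneq S 0.
  by rewrite S0 oppr0 mul0r; have := Gap_ge_dist _ Qx0; rewrite S0 mul0r oppr0.
have S_gt0 : 0 < S by rewrite lt0r S_neq0 (le_trans (enorm_ge0 _) (supnorm_ge Qx0)).
have : - Gap z H Q / S <= distRn z Q.
  apply: lb_le_inf; first by exists (enorm (z - x0)), x0.
  move=> r [x [Qx ->]]; rewrite ler_pdivrMr // mulrC lerNl.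
  exact: Gap_ge_dist.
by rewrite ler_pdivrMr // mulrC mulNr lerNl.
Qed.

End GapFunction.

Lemma Gap_ge_supnorm_dist_lipschitz {R : realType} {n : nat} (X Q D : set 'rV[R]_n)
    (H : 'rV[R]_n -> 'rV[R]_n) (L : R) (z : 'rV[R]_n) :
  compact X -> Q `<=` X -> Q `<=` D -> Q !=set0 -> 0 <= L -> lipschitzRn D H L ->
  - supnorm H Q * distRn z Q <= Gap z H Q.
Proof.
move=> cX QX QD [x0 Qx0] L_ge0 lipH.
have Q_bd u v : Q u -> Q v -> enorm (u - v) <= diamRn X.
  by move=> /QX Xu /QX Xv; exact: diamRn_ge.
have lipHQ : lipschitzRn Q H L by move=> u v /QD Du /QD Dv; exact: lipH.
apply: (Gap_ge_supnorm_dist Qx0 Q_bd) => x Qx.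
exact: lipschitzRn_enorm_le L_ge0 lipHQ Q_bd Qx0 Qx.
Qed.

Definition eg_rate {R : realType} (L eta mu l : R) : R :=
  ((1 - l ^+ 2 * L ^+ 2)^-1 + (2 * l * eta * mu)^-1)^-1.

Section Rates.
Context {R : realType}.
Variables (L eta mu : R).
Hypotheses (L_ge0 : 0 <= L) (eta_gt0 : 0 < eta) (mu_gt0 : 0 < mu).

Lemma compl_sqr_gt0 (l : R) : 0 <= l -> l * L < 1 -> 0 < 1 - l ^+ 2 * L ^+ 2.
Proof. by move=> l_ge0 lL_lt1; rewrite -exprMn subr_gt0 expr_lt1 ?mulr_ge0. Qed.

Lemma eg_rate_gt0_lt1 (l : R) : 0 < l -> l * L < 1 -> 0 < eg_rate L eta mu l < 1.
Proof.
move=> l_gt0 lL_lt1; have c1_gt0 := compl_sqr_gt0 (ltW l_gt0) lL_lt1.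
have c1_le1 : 1 - l ^+ 2 * L ^+ 2 <= 1 by rewrite gerBl mulr_ge0 ?sqr_ge0.
have inv_c1_ge1 : 1 <= (1 - l ^+ 2 * L ^+ 2)^-1 by rewrite invf_ge1.
have inv_c2_gt0 : 0 < (2 * l * eta * mu)^-1 by rewrite invr_gt0 !mulr_gt0.
by rewrite invr_gt0 invf_lt1 ?andbT; lra.
Qed.

Lemma eg_rate_ge (lo hi l : R) : 0 < lo -> lo <= l <= hi -> hi * L < 1 ->
  ((1 - hi ^+ 2 * L ^+ 2)^-1 + (2 * lo * eta * mu)^-1)^-1 <= eg_rate L eta mu l.
Proof.
move=> lo_gt0 /andP[lo_le l_le] hiL_lt1.
have l_gt0 := lt_le_trans lo_gt0 lo_le; have hi_gt0 := lt_le_trans l_gt0 l_le.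
have c1_gt0 := compl_sqr_gt0 (ltW hi_gt0) hiL_lt1.
have c1_le : 1 - hi ^+ 2 * L ^+ 2 <= 1 - l ^+ 2 * L ^+ 2.
  by rewrite lerD2l lerN2 -!exprMn lerXn2r ?nnegrE ?mulr_ge0 ?(ltW l_gt0) ?(ltW hi_gt0) ?ler_wpM2r.
have c1'_gt0 := lt_le_trans c1_gt0 c1_le.
rewrite /eg_rate lef_pV2 ?posrE ?addr_gt0 ?invr_gt0 ?mulr_gt0 //.
by rewrite lerD // lef_pV2 ?posrE ?mulr_gt0 // !ler_pM2r // ler_pM2l.
Qed.

End Rates.

Lemma ceil_mul_ln_le {R : realType} (T A : R) (k : nat) : 0 < T ->
  Num.ceil (T * ln A) <= k%:Z -> A <= expR (k%:R * T^-1).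
Proof.
move=> T_gt0 ceil_le; have [A_gt0|A_le0] := ltP 0 A; last first.
  exact: le_trans A_le0 (ltW (expR_gt0 _)).
rewrite -[A in A <= _]lnK ?posrE // ler_expR mulrC ler_pdivlMl //.
by rewrite -(ler_int R) in ceil_le; exact: le_trans (ceil_ge _) ceil_le.
Qed.

Section IneIREG.
Context {R : realType} {n : nat}.
Notation vec := 'rV[R]_n.
Variables (F H : vec -> vec) (DomF DomH X Omega : set vec) (LF LH mu eta : R).
Variables (alpha lam : nat -> R) (x w w' y : nat -> vec).
Hypotheses (LF_ge0 : 0 <= LF) (LH_ge0 : 0 <= LH) (mu_gt0 : 0 < mu) (eta_gt0 : 0 < eta).
Hypotheses (monF : monotoneRn DomF F) (lipF : lipschitzRn DomF F LF).
Hypotheses (smH : strongly_monotoneRn DomH H mu) (lipH : lipschitzRn DomH H LH).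
Hypotheses (cX : compact X) (convX : convex_setRn X) (convO : convex_setRn Omega).
Hypotheses (XO : X `<=` Omega) (OD : Omega `<=` DomF `&` DomH).
Hypotheses (lam_gt0 : forall j, 0 < lam j) (lamL_lt1 : forall j, lam j * (LF + eta * LH) < 1).
Hypothesis ireg : IneIREG F H X Omega alpha lam (fun _ => eta) x w w' y.

Local Notation beta j := (eg_rate (LF + eta * LH) eta mu (lam j)).

Fact IneIREG_L_ge0 : 0 <= LF + eta * LH.
Proof. by rewrite addr_ge0 // mulr_ge0 // ltW. Qed.

Lemma IneIREG_x_in j : X (x j).
Proof. by case: j => [|j]; [case: ireg | have [_ [_ [_ []]]] := ireg.2 j]. Qed.

Lemma IneIREG_y_in j : X (y j).
Proof. by have [_ [_ [[]]]] := ireg.2 j. Qed.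

Lemma xprev_pred j : xprev x j = x j.-1.
Proof. by case: j. Qed.

Lemma IneIREG_contraction j x1 : VIsol F X x1 ->
  dotp (x j.+1 - x1) (x j.+1 - x1) <=
    (1 - beta j) * dotp (w j - x1) (w j - x1) - 2 * (lam j * eta) * dotp (H x1) (y j - x1).
Proof.
move=> [Xx1 x1_sol]; have [_ [proj_w' [proj_y proj_x]]] := ireg.2 j.
have OF u : Omega u -> DomF u by move=> /OD [].
have OH u : Omega u -> DomH u by move=> /OD [].
have lipFO : lipschitzRn Omega F LF by move=> u v /OF Fu /OF Fv; exact: lipF.
have lipHO : lipschitzRn Omega H LH by move=> u v /OH Hu /OH Hv; exact: lipH.
have monFO : monotoneRn Omega F by move=> u v /OF Fu /OF Fv; exact: monF.
have smHO : strongly_monotoneRn Omega H mu by move=> u v /OH Hu /OH Hv; exact: smH.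
have lipG := lipschitzRn_addZ (ltW eta_gt0) lipFO lipHO.
have smG := strongly_monotoneRn_addZ (ltW eta_gt0) monFO smHO.
have Oy := XO (IneIREG_y_in j); have Ox1 := XO Xx1.
have strong : eta * mu * dotp (y j - x1) (y j - x1) + eta * dotp (H x1) (y j - x1)
                <= dotp (F (y j) + eta *: H (y j)) (y j - x1).
  have := smG _ _ Oy Ox1; have := x1_sol _ (IneIREG_y_in j); rewrite enorm_sqr.
  have -> : dotp (F (y j) + eta *: H (y j) - (F x1 + eta *: H x1)) (y j - x1)
    = dotp (F (y j) + eta *: H (y j)) (y j - x1) - dotp (F x1) (y j - x1)
      - eta * dotp (H x1) (y j - x1) by dotp_ring.
  lra.
apply: le_trans (extragradient_contraction convX convO XO lipG IneIREG_L_ge0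
  proj_w' proj_y proj_x Xx1 (lam_gt0 j) (lamL_lt1 j) (mulr_gt0 eta_gt0 mu_gt0) strong) _.
by rewrite /eg_rate !mulrA.
Qed.

Lemma eg_rate_lam_gt0_lt1 j : 0 < beta j < 1.
Proof. exact: (eg_rate_gt0_lt1 IneIREG_L_ge0 eta_gt0 mu_gt0 (lam_gt0 j) (lamL_lt1 j)). Qed.

Local Notation weight j := (lam j * eta * invprod (fun i => beta i) j.+1).

Lemma IneIREG_weight_gt0 j : 0 < weight j.
Proof. by rewrite !mulr_gt0 ?invprod_gt0 //; exact: eg_rate_lam_gt0_lt1. Qed.

Lemma IneIREG_weight_sum_ge_last k : weight k <= \sum_(j < k.+1) weight j.
Proof.
rewrite big_ord_recr /= lerDr; apply: sumr_ge0 => j _.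
exact: ltW (IneIREG_weight_gt0 j).
Qed.

Lemma IneIREG_weight_sum_gt0 k : (0 < k)%N -> 0 < \sum_(j < k) weight j.
Proof.
case: k => // k _.
exact: lt_le_trans (IneIREG_weight_gt0 k) (IneIREG_weight_sum_ge_last k).
Qed.

Lemma IneIREG_weight_sum_horizon (lo hi eps A : R) (k : nat) :
  0 < lo -> (forall j, lo <= lam j <= hi) -> hi * (LF + eta * LH) < 1 -> 0 < eps -> (0 < k)%N ->
  Num.ceil (((1 - hi ^+ 2 * (LF + eta * LH) ^+ 2)^-1 + (2 * lo * eta * mu)^-1) *
            ln (A / (lo * eta * eps))) <= k%:Z ->
  A <= eps * \sum_(j < k) weight j.
Proof.
move=> lo_gt0 lam_bd hiL_lt1 eps_gt0; case: k => // k _.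
set T := _ + _ => k_large; have L_ge0 := IneIREG_L_ge0.
have hi_ge0 : 0 <= hi.
  by case/andP: (lam_bd 0%N) => lo_le le_hi; exact/ltW/(lt_le_trans lo_gt0)/(le_trans lo_le).
have T_gt0 : 0 < T by rewrite addr_gt0 // invr_gt0 ?mulr_gt0 ?(compl_sqr_gt0 L_ge0 hi_ge0).
have beta_ge j : T^-1 <= beta j := eg_rate_ge L_ge0 eta_gt0 mu_gt0 lo_gt0 (lam_bd j) hiL_lt1.
have := le_trans (ceil_mul_ln_le T_gt0 k_large) (invprod_ge_expR eg_rate_lam_gt0_lt1 k.+1 beta_ge).
rewrite ler_pdivrMr ?mulr_gt0 // => /le_trans; apply.
apply: le_trans (ler_wpM2l (ltW eps_gt0) (IneIREG_weight_sum_ge_last k)).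
rewrite mulrC mulrAC mulrC ler_pM2l // ler_wpM2r ?ler_wpM2r ?(ltW eta_gt0) //.
  exact/ltW/invprod_gt0/eg_rate_lam_gt0_lt1.
by case/andP: (lam_bd k).
Qed.

Hypotheses (alpha_ge0 : forall j, 0 <= alpha j) (alpha0_le1 : alpha 0%N <= 1).
Hypothesis alphaS : forall j, alpha j.+1 <= (1 - beta j) * alpha j.

Lemma IneIREG_weighted_gap_sum_le x1 m : VIsol F X x1 ->
  2 * \sum_(j < m) weight j * dotp (H x1) (y j - x1) <= (2 * m%:R + 1) * diamRn X ^+ 2.
Proof.
move=> x1_sol; have Xx1 : X x1 by case: x1_sol.
apply: (inertial_weighted_sum_le eg_rate_lam_gt0_lt1 alpha_ge0 alpha0_le1 alphaS
  (c := fun j => lam j * eta) (h := fun j => dotp (H x1) (y j - x1))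
  (u := fun j => dotp (x j - x1) (x j - x1)) (d := fun j => dotp (x j - x j.-1) (x j - x j.-1))).
- by move=> j; rewrite dotp_ge0 /= (dotp_le_diamRn cX (IneIREG_x_in j) Xx1).
- by move=> j; rewrite dotp_ge0 /= (dotp_le_diamRn cX (IneIREG_x_in j) (IneIREG_x_in j.-1)).
move=> j /=; apply: le_trans (IneIREG_contraction j x1_sol) _.
have shift : (x j - x1) - (x j.-1 - x1) = x j - x j.-1 by rewrite opprB addrA subrK.
have -> : w j - x1 = (x j - x1) + alpha j *: ((x j - x1) - (x j.-1 - x1)).
  by rewrite shift (ireg.2 j).1 xprev_pred addrAC.
by rewrite dotp_extrapolate shift mulrA.
Qed.

Lemma IneIREG_Gap_weighted_mean_le k : (0 < k)%N -> VIsol F X !=set0 ->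
  Gap (weighted_mean (fun j => weight j) y k) H (VIsol F X)
  <= (2 * k%:R + 1) * diamRn X ^+ 2 / (2 * \sum_(j < k) weight j).
Proof.
move=> k_gt0 Qne; have sum_gt0 := IneIREG_weight_sum_gt0 k_gt0.
apply: Gap_le => // x1 x1_sol; rewrite dotp_weighted_mean ?gt_eqF //.
rewrite ler_pdivlMr ?mulr_gt0 //; set S := \sum_(j < k) weight j.
have -> : S^-1 * (\sum_(j < k) weight j * dotp (H x1) (y j - x1)) * (2 * S)
          = 2 * \sum_(j < k) weight j * dotp (H x1) (y j - x1).
  by field; exact: lt0r_neq0.
exact: IneIREG_weighted_gap_sum_le.
Qed.

End IneIREG.

Theorem corollary4p16 (R : realType) (n : nat)
  (F H : 'rV[R]_n -> 'rV[R]_n) (DomF DomH X Omega : set 'rV[R]_n)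
  (LF LH mu eta lamlo lamhi eps : R)
  (alpha lam : nat -> R) (x w w' y : nat -> 'rV[R]_n) (k : nat) :
  (* standing assumptions *)
  0 < LF -> 0 < LH ->
  monotoneRn DomF F -> lipschitzRn DomF F LF ->
  monotoneRn DomH H -> lipschitzRn DomH H LH ->
  X !=set0 -> compact X -> convex_setRn X ->
  Omega !=set0 -> closed Omega -> convex_setRn Omega ->
  X `<=` Omega -> Omega `<=` DomF `&` DomH ->
  VIsol F X !=set0 ->
  (forall j, 0 <= alpha j) ->
  IneIREG F H X Omega alpha lam (fun _ => eta) x w w' y ->
  (* hypotheses of the corollary *)
  0 < mu -> strongly_monotoneRn DomH H mu ->
  0 < eta ->
  let L := LF + eta * LH in
  0 < lamlo -> lamlo <= lamhi -> lamhi < 1 / L ->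
  (forall j, lamlo <= lam j <= lamhi) ->
  let beta := fun j => ((1 - lam j ^+ 2 * L ^+ 2)^-1 + (2 * lam j * eta * mu)^-1)^-1 in
  0 <= alpha 0%N <= 1 ->
  (forall j, alpha j.+1 <= (1 - beta j) * alpha j) ->
  let p := fun j : nat => (\prod_(i < j.+1) (1 - beta i))^-1 in
  let Lam := fun m : nat => \sum_(j < m) lam j * eta * p j in
  let ybar := fun m : nat => (Lam m)^-1 *: \sum_(j < m) (lam j * eta * p j) *: y j in
  0 < eps -> (1 <= k)%N ->
  Num.ceil (((1 - lamhi ^+ 2 * L ^+ 2)^-1 + (2 * lamlo * eta * mu)^-1) *
            ln ((k.+1)%:R * diamRn X ^+ 2 / (lamlo * eta * eps))) <= k%:Z ->
  - supnorm H (VIsol F X) * distRn (ybar k) (VIsol F X) <= Gap (ybar k) H (VIsol F X)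
  /\ Gap (ybar k) H (VIsol F X) <= eps.
Proof.
move=> LF_gt0 LH_gt0 monF lipF _ lipH _ cX convX _ _ convO XO OD Qne alpha_ge0 ireg
  mu_gt0 smH eta_gt0 L lamlo_gt0 lamlo_le_hi lamhi_lt lam_bd beta /andP[_ alpha0_le1] alphaS
  p Lam ybar eps_gt0 k_ge1 k_large.
(* The iterates are given. *)
have L_gt0 : 0 < L by rewrite addr_gt0 ?mulr_gt0.
have lamhiL_lt1 : lamhi * L < 1 by rewrite -ltr_pdivlMr.
have lam_gt0 j : 0 < lam j by case/andP: (lam_bd j) => /(lt_le_trans lamlo_gt0).
have lamL_lt1 j : lam j * L < 1.
  by apply: le_lt_trans lamhiL_lt1; rewrite ler_pM2r //; case/andP: (lam_bd j).
split.
  have QX : VIsol F X `<=` X by move=> u [].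
  have QD : VIsol F X `<=` DomH by move=> u [/XO/OD[]].
  exact: Gap_ge_supnorm_dist_lipschitz cX QX QD Qne (ltW LH_gt0) lipH.
have Lam_gt0 : 0 < Lam k :=
  IneIREG_weight_sum_gt0 (ltW LF_gt0) (ltW LH_gt0) mu_gt0 eta_gt0 lam_gt0 lamL_lt1 k_ge1.
have horizon : k.+1%:R * diamRn X ^+ 2 <= eps * Lam k :=
  IneIREG_weight_sum_horizon (ltW LF_gt0) (ltW LH_gt0) mu_gt0 eta_gt0 lam_gt0 lamL_lt1
    lamlo_gt0 lam_bd lamhiL_lt1 eps_gt0 k_ge1 k_large.
(* [ybar k] is [weighted_mean (fun j => lam j * eta * p j) y k] by conversion. *)
have gap_le : Gap (ybar k) H (VIsol F X) <= (2 * k%:R + 1) * diamRn X ^+ 2 / (2 * Lam k) :=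
  IneIREG_Gap_weighted_mean_le (ltW LF_gt0) (ltW LH_gt0) mu_gt0 eta_gt0 monF lipF smH lipH
    cX convX convO XO OD lam_gt0 lamL_lt1 ireg alpha_ge0 alpha0_le1 alphaS k_ge1 Qne.
apply: le_trans gap_le _; rewrite ler_pdivrMr ?mulr_gt0 //.
by move: horizon; rewrite -natr1; have := sqr_ge0 (diamRn X); lra.
Qed.
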